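(* Let $m$ be a positive integer and let $p$ be a positive integer which is a multiple of $m$ if $m$ is odd and a multiple of $2m$ if $m$ is even. Let $S$ be a $p$-periodic sequence of elements of $\mathbb{Z}/m\mathbb{Z}$ whose orbit is $(p,p)$-periodic. Then the triangles $\nabla S[\lambda p]$ are balanced for all non-negative integers $\lambda$ if and only if there exist two distinct positive integers $\lambda_1,\lambda_2$ such that $\nabla S[\lambda_1p]$ and $\nabla S[\lambda_2p]$ are balanced.
   Context: A sequence $S=(u_j)_{j\in\mathbb{Z}}$ is $p$-periodic if $u_{j+p}=u_j$ for all $j$. $S[n]=(u_0,\dots,u_{n-1})$. The orbit of $S$ is $(a_{i,j})_{(i,j)\in\mathbb{N}\times\mathbb{Z}}$ with $a_{0,j}=u_j$, $a_{i,j}=-a_{i-1,j}-a_{i-1,j+1}$ for $i\ge1$; it is $(p,q)$-periodic if $a_{i+q,j}=a_{i,j+p}=a_{i,j}$ for all $(i,j)$. For a finite sequence $(u_0,\dots,u_{n-1})$, $\nabla(u_0,\dots,u_{n-1})=(a_{i,j})_{i,j\ge0,i+j<n}$ defined by the same rule; it is balanced if every element of $\mathbb{Z}/m\mathbb{Z}$ occurs the same number of times among its entries. *)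

From HB Require Import structures.
From mathcomp Require Import all_boot all_order all_algebra.
Set Implicit Arguments. Unset Strict Implicit. Unset Printing Implicit Defensive.
Import GRing.Theory.
Local Open Scope ring_scope.

(* Z/mZ for a positive integer m: the ordinals 'I_m, written 'I_(m.-1).+1 so
   that the canonical ring structure of Zp is available (for 0 < m this is
   exactly 'I_m with addition/opposite mod m). *)
Notation Zmod m := ('I_(m.-1).+1).

Definition periodic (m : nat) (S : int -> Zmod m) (p : nat) : Prop :=
  forall j : int, S (j + p%:Z) = S j.

Fixpoint orbit (m : nat) (S : int -> Zmod m) (i : nat) (j : int) : Zmod m :=
  match i with
  | 0 => S j
  | i'.+1 => - orbit S i' j - orbit S i' (j + 1)
  end.

Definition orbit_periodic (m : nat) (S : int -> Zmod m) (p q : nat) : Prop :=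
  forall (i : nat) (j : int),
    orbit S (i + q) j = orbit S i j /\ orbit S i (j + p%:Z) = orbit S i j.

Definition Sprefix (m : nat) (S : int -> Zmod m) (n : nat) : seq (Zmod m) :=
  [seq S (Posz j) | j <- iota 0 n].

(* Derived triangle of a finite sequence u = (u_0,...,u_{n-1}):
   a_{0,j} = u_j, a_{i,j} = -a_{i-1,j} - a_{i-1,j+1}; meaningful for i+j < n. *)
Fixpoint nabla (m : nat) (u : seq (Zmod m)) (i j : nat) : Zmod m :=
  match i with
  | 0 => nth 0 u j
  | i'.+1 => - nabla u i' j - nabla u i' j.+1
  end.

Definition occ (m : nat) (u : seq (Zmod m)) (x : Zmod m) : nat :=
  #|[set ij : 'I_(size u) * 'I_(size u) |
       ((ij.1 : nat) + ij.2 < size u)%N && (nabla u ij.1 ij.2 == x)]|.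

Definition balanced (m : nat) (u : seq (Zmod m)) : Prop :=
  forall x y : Zmod m, occ u x = occ u y.

From Pilot Require Import Defs.
From mathcomp Require Import all_boot all_order all_algebra.
From mathcomp Require Import zify.

(* Let f x i j be 1 if a_{i,j} = x and 0 otherwise.  The number of
   occurrences of x in the triangle of S[n] is the sum of f x over i + j < n,
   and f x is p-periodic in i and in j.  Cut into p-blocks, the triangle of
   side lambda p consists of lambda triangles of side p and 'C(lambda, 2)
   full p x p squares, so the count is lambda t_x + 'C(lambda, 2) q_x.  Two
   distinct positive values of lambda determine t_x and q_x; hence if both
   counts are independent of x, so are t_x, q_x and every count.  Only the
   (p, p)-periodicity of the orbit is used. *)

Lemma big_nat_shift (R : Type) (idx : R) (op : R -> R -> R) (a n : nat)
    (F : nat -> R) :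
  \big[op/idx]_(a <= j < a + n) F j = \big[op/idx]_(0 <= j < n) F (j + a).
Proof. by rewrite -{1}(add0n a) big_addn addKn. Qed.

Section TriangleSums.
Variables (p : nat) (f : nat -> nat -> nat).

Definition tri_sum (n : nat) : nat :=
  \sum_(0 <= i < n) \sum_(0 <= j < n - i) f i j.

Definition square_sum : nat := \sum_(0 <= i < p) \sum_(0 <= j < p) f i j.

Hypothesis f_periodic1 : forall i j, f (i + p) j = f i j.
Hypothesis f_periodic2 : forall i j, f i (j + p) = f i j.

Lemma f_periodic2_mul i j l : f i (j + l * p) = f i j.
Proof. by elim: l => [|l IHl]; rewrite ?addn0 // mulSnr addnA f_periodic2. Qed.

Lemma sum_row_mul i l :
  \sum_(0 <= j < l * p) f i j = l * \sum_(0 <= j < p) f i j.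
Proof.
elim: l => [|l IHl]; first by rewrite big_geq.
rewrite mulSnr (big_cat_nat (leq0n _) (leq_addr _ _)) /= IHl big_nat_shift.
by under [X in _ + X]eq_bigr => j _ do rewrite f_periodic2_mul; rewrite mulSnr.
Qed.

Lemma tri_sumS l :
  tri_sum (l.+1 * p) = tri_sum (l * p) + l * square_sum + tri_sum p.
Proof.
rewrite /tri_sum mulSn (big_cat_nat (leq0n _) (leq_addr _ _)) /= addnC.
have -> : \sum_(p <= i < p + l * p) \sum_(0 <= j < p + l * p - i) f i j
          = \sum_(0 <= i < l * p) \sum_(0 <= j < l * p - i) f i j.
  rewrite big_nat_shift; apply: eq_bigr => i _.
  under eq_bigr => j _ do rewrite f_periodic1.
  by rewrite [i + p]addnC subnDl.
rewrite -addnA /square_sum big_distrr -big_split /=; congr (_ + _).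
apply: eq_big_nat => i /andP[_ lt_ip].
have -> : p + l * p - i = l * p + (p - i) by lia.
rewrite (big_cat_nat (leq0n _) (leq_addr _ _)) /= sum_row_mul big_nat_shift.
by under [X in _ + X]eq_bigr => j _ do rewrite f_periodic2_mul.
Qed.

Lemma tri_sum_mul l : tri_sum (l * p) = l * tri_sum p + 'C(l, 2) * square_sum.
Proof.
elim: l => [|l IHl]; first by rewrite /tri_sum big_geq.
by rewrite tri_sumS IHl binS bin1 !mulSn; lia.
Qed.

End TriangleSums.

Lemma bin2_mul2 n : 'C(n, 2) * 2 = n * n.-1.
Proof. by rewrite -[2]/(2`!) bin_ffact ffactnS ffactn1. Qed.

Lemma affine_eq_at_two {a b q q' s s' : nat} : a != b ->
  a * q + s = a * q' + s' -> b * q + s = b * q' + s' -> q = q' /\ s = s'.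
Proof.
move=> neq_ab eq_a eq_b.
suff eq_q : q = q' by split=> //; move: eq_a; rewrite eq_q => /addnI.
nia.
Qed.

Lemma binomial_affine_eq_at_two {l1 l2 t t' q q' : nat} :
  0 < l1 -> 0 < l2 -> l1 != l2 ->
  l1 * t + 'C(l1, 2) * q = l1 * t' + 'C(l1, 2) * q' ->
  l2 * t + 'C(l2, 2) * q = l2 * t' + 'C(l2, 2) * q' ->
  t = t' /\ q = q'.
Proof.
have affine l : 0 < l -> l * t + 'C(l, 2) * q = l * t' + 'C(l, 2) * q' ->
    l.-1 * q + t.*2 = l.-1 * q' + t'.*2.
  move=> l_gt0 eq_l; apply/eqP; rewrite -(eqn_pmul2l l_gt0); apply/eqP.
  have := bin2_mul2 l; rewrite -!mul2n; nia.
move=> l1_gt0 l2_gt0 neq_l12 /(affine _ l1_gt0) eq1 /(affine _ l2_gt0) eq2.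
have neq_pred : l1.-1 != l2.-1 by apply: contra neq_l12; lia.
by have [eq_q /double_inj eq_t] := affine_eq_at_two neq_pred eq1 eq2.
Qed.

Lemma occ_sum (m : nat) (u : seq (Zmod m)) (x : Zmod m) : occ u x =
  \sum_(0 <= i < size u) \sum_(0 <= j < size u)
    ((i + j < size u) && (nabla u i j == x)).
Proof.
rewrite big_mkord; under eq_bigr => i _ do rewrite big_mkord.
rewrite pair_big /= /occ -sum1_card big_mkcond /=.
by apply: eq_bigr => -[i j] _; rewrite inE /=; case: (_ && _).
Qed.

Section OrbitCounts.
Variables (m : nat) (S : int -> Zmod m).

Definition orbit_indicator (x : Zmod m) (i j : nat) : nat :=
  Defs.orbit S i (Posz j) == x.

Lemma nabla_Sprefix n i j :
  i + j < n -> nabla (Sprefix S n) i j = Defs.orbit S i (Posz j).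
Proof.
elim: i j => [|i IHi] j /= lt_ijn.
  by rewrite /Sprefix (nth_map 0) ?size_iota // nth_iota.
have lt_ij1n : i + j.+1 < n by rewrite addnS -addSn.
rewrite !IHi //; last by rewrite -addnS ltnW.
by rewrite -[j.+1]addn1 PoszD.
Qed.

Lemma occ_Sprefix n x : occ (Sprefix S n) x = tri_sum (orbit_indicator x) n.
Proof.
rewrite occ_sum size_map size_iota /tri_sum.
apply: eq_big_nat => i /andP[_ lt_in].
rewrite (big_nat_widen _ _ _ _ _ (leq_subr i n)) [RHS]big_mkcond.
apply: eq_big_nat => j _; rewrite ltn_subRL /=.
by case: ltnP => // lt_ijn; rewrite nabla_Sprefix.
Qed.

Variable p : nat.
Hypothesis S_orbit_periodic : orbit_periodic S p p.

Lemma occ_Sprefix_mul l x : occ (Sprefix S (l * p)) x =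
  l * occ (Sprefix S p) x + 'C(l, 2) * square_sum p (orbit_indicator x).
Proof.
rewrite !occ_Sprefix tri_sum_mul // => i j; rewrite /orbit_indicator.
  by rewrite (proj1 (S_orbit_periodic _ _)).
by rewrite PoszD (proj2 (S_orbit_periodic _ _)).
Qed.

End OrbitCounts.

Arguments occ_Sprefix_mul {m S p}.

Local Open Scope ring_scope.

Theorem proposition14 (m p : nat) (S : int -> Zmod m) :
  (0 < m)%N -> (0 < p)%N ->
  (if odd m then (m %| p)%N else ((2 * m) %| p)%N) ->
  periodic S p -> orbit_periodic S p p ->
  ((forall lambda : nat, balanced (Sprefix S (lambda * p)%N))
   <->
   (exists lambda1 lambda2 : nat,
      [/\ (0 < lambda1)%N, (0 < lambda2)%N, lambda1 <> lambda2,
          balanced (Sprefix S (lambda1 * p)%N) & balanced (Sprefix S (lambda2 * p)%N)])).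
Proof.
move=> _ _ _ _ S_orbit_periodic.
split=> [bal | [l1 [l2 [l1_gt0 l2_gt0 /eqP neq_l12 bal1 bal2]]] l x y].
  by exists 1%N, 2%N.
have := bal2 x y; have := bal1 x y.
rewrite !(occ_Sprefix_mul S_orbit_periodic) => eq_l1 eq_l2.
by have [-> ->] := binomial_affine_eq_at_two l1_gt0 l2_gt0 neq_l12 eq_l1 eq_l2.
Qed.
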